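(* Let $i\ge1$. Then $\tilde\Delta^{i-1}\circ F_i$ is the identity of $Prim({\cal H}_R)^{\otimes i}$, and $\tilde\Delta^{k}\circ F_i=0$ for every $k>i-1$. Moreover $F_i$ is injective, and the sum $\mathbb{Q}1+\sum_{i=1}^{\infty}Im(F_i)$ is direct.
   Context: A rooted tree is a finite connected and simply connected graph with a distinguished vertex (the root), edges oriented away from the root; its weight is its number of vertices. ${\cal H}_R$ is the commutative polynomial algebra over $\mathbb{Q}$ on the isomorphism classes of rooted trees; monomials are forests ($1$ is the empty forest), the weight of a forest is its total number of vertices. An admissible cut $C$ of a tree $t$ is a nonempty set of edges such that every path from the root to a vertex contains at most one edge of $C$; removing them gives a forest in which $R^C(t)$ is the tree containing the root and $P^C(t)$ the product of the others. ${\cal H}_R$ is a Hopf algebra with coproduct the algebra morphism $\Delta$ with $\Delta(t)=1\otimes t+t\otimes1+\sum_C P^C(t)\otimes R^C(t)$ on trees, unit $\eta$ and counit $\varepsilon$ ($\varepsilon(1)=1$, $\varepsilon(t)=0$ on trees). $\tilde\Delta(x):=\Delta(x)-1\otimes x-x\otimes1$; $Prim({\cal H}_R)=\ker\tilde\Delta$. Set $\tilde\Delta^0=Id-\eta\circ\varepsilon$, $\tilde\Delta^1=\tilde\Delta$, $\tilde\Delta^k=(\tilde\Delta^{k-1}\otimes Id)\circ\tilde\Delta$, a map ${\cal H}_R\to{\cal H}_R^{\otimes(k+1)}$. For forests $M,N$: $M\top N=0$ if $N=1$, and otherwise $M\top N=\frac{1}{weight(N)}\sum_v N_v$, where $v$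 runs over vertices of $N$ and $N_v$ is obtained from $N$ by attaching every tree of $M$ to $v$ (an edge from $v$ to each root of $M$); extended bilinearly. $p_i\top\cdots\top p_1:=(p_i\top\cdots\top p_2)\top p_1$. $F_i:Prim({\cal H}_R)^{\otimes i}\to{\cal H}_R$ is the linear map with $F_i(p_i\otimes\cdots\otimes p_1)=p_i\top\cdots\top p_1$. *)

(* Connes-Kreimer Hopf algebra of rooted trees H_R over Q,
   modelled by formal finite linear combinations over explicit bases. *)
From HB Require Import structures.
From mathcomp Require Import all_boot all_order all_algebra.
Set Implicit Arguments.
Unset Strict Implicit.
Unset Printing Implicit Defensive.
Import Order.TTheory GRing.Theory Num.Theory.

(* The order of children is irrelevant: isomorphism classes are handled *)
(* through the canonical form [canon] below.                           *)
Inductive rtree := RNode of seq rtree.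

Fixpoint rtree_enc (t : rtree) : GenTree.tree unit :=
  let: RNode ts := t in GenTree.Node 0 (map rtree_enc ts).

Fixpoint rtree_dec (g : GenTree.tree unit) : rtree :=
  match g with
  | GenTree.Leaf _ => RNode [::]
  | GenTree.Node _ gs => RNode (map rtree_dec gs)
  end.

Lemma rtree_encK_aux : forall t, rtree_dec (rtree_enc t) = t.
Proof.
fix IH 1; case=> ts /=; congr RNode; elim: ts => //= t ts IHts.
by rewrite IH IHts.
Qed.

Lemma rtree_encK : cancel rtree_enc rtree_dec.
Proof. exact: rtree_encK_aux. Qed.

HB.instance Definition _ := Countable.copy rtree (can_type rtree_encK).

Definition leaf : rtree := RNode [::].

Fixpoint weight (t : rtree) : nat :=
  let: RNode ts := t in (sumn (map weight ts)).+1.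

Definition tle (a b : rtree) : bool := (pickle a <= pickle b)%N.

Fixpoint canon (t : rtree) : rtree :=
  let: RNode ts := t in RNode (sort tle (map canon ts)).

(* Forests = monomials of H_R (the empty forest is 1). *)
Definition forest := seq rtree.
Definition fcanon (f : forest) : forest := sort tle (map canon f).
Definition fweight (f : forest) : nat := sumn (map weight f).

(* Vertices are addressed by paths from the root ([::] = the root,
   i :: p = vertex p inside the i-th subtree of the root).  An edge is
   identified with its endpoint farthest from the root (a non-root vertex). *)
Fixpoint vertices (t : rtree) : seq (seq nat) :=
  let: RNode ts := t in
  [::] :: (fix aux (i : nat) (us : seq rtree) : seq (seq nat) :=
             match us with
             | [::] => [::]
             | u :: us' => map (cons i) (vertices u) ++ aux i.+1 us'
             end) 0%N ts.

Definition edges (t : rtree) : seq (seq nat) :=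
  [seq v <- vertices t | v != [::]].

Fixpoint subtree (t : rtree) (p : seq nat) : rtree :=
  match p with
  | [::] => t
  | i :: p' => let: RNode ts := t in subtree (nth leaf ts i) p'
  end.

(* the tree containing the root after removing the edges of C *)
Fixpoint prune (t : rtree) (C : seq (seq nat)) : rtree :=
  let: RNode ts := t in
  RNode ((fix aux (i : nat) (us : seq rtree) : seq rtree :=
            match us with
            | [::] => [::]
            | u :: us' =>
                if [:: i] \in C then aux i.+1 us'
                else prune u [seq behead c | c <- C & (c != [::]) && (head 0%N c == i)]
                       :: aux i.+1 us'
            end) 0%N ts).

Fixpoint subseqs (T : Type) (s : seq T) : seq (seq T) :=
  match s with
  | [::] => [:: [::]]
  | x :: s' => let r := subseqs s' in map (cons x) r ++ r
  end.

(* An admissible cut: a nonempty set C of edges such that every path from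
   the root to a vertex v contains at most one edge of C (the edges on that
   path are exactly the non-root prefixes of v). *)
Definition admissible (t : rtree) (C : seq (seq nat)) : bool :=
  [&& C != [::], all (fun c => c \in edges t) C, uniq C &
      all (fun v => (count (fun c => prefix c v) C <= 1)%N) (vertices t)].

Definition adm_cuts (t : rtree) : seq (seq (seq nat)) :=
  [seq C <- subseqs (edges t) | admissible t C].

Definition PC (t : rtree) (C : seq (seq nat)) : forest := [seq subtree t c | c <- C].
Definition RC (t : rtree) (C : seq (seq nat)) : rtree := prune t C.

(* H  = elements of H_R : combinations of forests.                      *)
(* HT = elements of tensor powers H_R^{(x) k}: combinations of k-lists   *)
(*      of forests [:: a_1; ...; a_k] standing for a_1 (x) ... (x) a_k.  *)
Local Open Scope ring_scope.

Definition H := seq (rat * forest).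
Definition HT := seq (rat * seq forest).

Definition coefH (x : H) (b : forest) : rat :=
  \sum_(e <- x | fcanon e.2 == fcanon b) e.1.
Definition coefT (x : HT) (b : seq forest) : rat :=
  \sum_(e <- x | map fcanon e.2 == map fcanon b) e.1.

Definition eqH (x y : H) : Prop := forall b, coefH x b = coefH y b.
Definition eqT (x y : HT) : Prop := forall b, coefT x b = coefT y b.

Definition scaleH (c : rat) (x : H) : H := [seq (c * e.1, e.2) | e <- x].
Definition scaleT (c : rat) (x : HT) : HT := [seq (c * e.1, e.2) | e <- x].

Definition oneH : H := [:: (1, [::])].

Definition mulT (x y : HT) : HT :=
  [seq (e.1 * d.1, [seq p.1 ++ p.2 | p <- zip e.2 d.2]) | e <- x, d <- y].

Definition Delta_tree (t : rtree) : HT :=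
  [:: (1, [:: [::]; [:: t]]); (1, [:: [:: t]; [::]])]
  ++ [seq (1, [:: PC t C; [:: RC t C]]) | C <- adm_cuts t].

(* Delta is an algebra morphism *)
Definition Delta_forest (f : forest) : HT :=
  foldr mulT [:: (1, [:: [::]; [::]])] (map Delta_tree f).

Definition Delta (x : H) : HT :=
  flatten [seq scaleT e.1 (Delta_forest e.2) | e <- x].

Definition eps_forest (f : forest) : rat := if f is [::] then 1 else 0.

Definition Dtilde_forest (f : forest) : HT :=
  Delta_forest f ++ [:: (-1, [:: [::]; f]); (-1, [:: f; [::]])].

Definition Dtilde (x : H) : HT :=
  flatten [seq scaleT e.1 (Dtilde_forest e.2) | e <- x].

(* tilde Delta^0 = Id - eta o eps ;
   tilde Delta^(k+1) = (tilde Delta^k (x) Id) o tilde Delta *)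
Fixpoint Dtilde_pow_forest (k : nat) (f : forest) : HT :=
  match k with
  | 0%N => [:: (1, [:: f]); (- eps_forest f, [:: [::]])]
  | k'.+1 =>
      flatten [seq scaleT e.1
                 [seq (d.1, rcons d.2 (nth [::] e.2 1))
                 | d <- Dtilde_pow_forest k' (nth [::] e.2 0)]
              | e <- Dtilde_forest f]
  end.

Definition Dtilde_pow (k : nat) (x : H) : HT :=
  flatten [seq scaleT e.1 (Dtilde_pow_forest k e.2) | e <- x].

Definition prim (p : H) : Prop := eqT (Dtilde p) [::].

Fixpoint graft (t : rtree) (p : seq nat) (M : forest) : rtree :=
  match p with
  | [::] => let: RNode ts := t in RNode (ts ++ M)
  | i :: p' => let: RNode ts := t in
               RNode (set_nth leaf ts i (graft (nth leaf ts i) p' M))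
  end.

(* vertices of a forest: (index of the tree, address in that tree) *)
Definition fvertices (N : forest) : seq (nat * seq nat) :=
  flatten [seq [seq (j, p) | p <- vertices (nth leaf N j)] | j <- iota 0 (size N)].

Definition graftF (N : forest) (v : nat * seq nat) (M : forest) : forest :=
  set_nth leaf N v.1 (graft (nth leaf N v.1) v.2 M).

Definition top_forest (M N : forest) : H :=
  if N is [::] then [::]
  else [seq ((fweight N)%:R^-1, graftF N v M) | v <- fvertices N].

Definition topH (x y : H) : H :=
  flatten [seq scaleH (e.1 * d.1) (top_forest e.2 d.2) | e <- x, d <- y].

(* p_i top ... top p_1 := (p_i top ... top p_2) top p_1, for
   ps = [:: p_i; ...; p_1] *)
Definition top_seq (ps : seq H) : H :=
  if ps is p :: rest then foldl topH p rest else [::].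

(* Elements of Prim(H_R)^{(x) i}: finite combinations
   X = sum_j c_j p_{j,i} (x) ... (x) p_{j,1} of pure tensors of primitives. *)
Definition in_prim_tens (i : nat) (X : seq (rat * seq H)) : Prop :=
  forall c ps, (c, ps) \in X -> size ps = i /\ (forall p, p \in ps -> prim p).

(* the element of H_R^{(x) i} a pure tensor / such a combination stands for *)
Fixpoint pure_tensor (ps : seq H) : HT :=
  match ps with
  | [::] => [:: (1, [::])]
  | p :: ps' => [seq (e.1 * d.1, e.2 :: d.2) | e <- p, d <- pure_tensor ps']
  end.

Definition tens (X : seq (rat * seq H)) : HT :=
  flatten [seq scaleT e.1 (pure_tensor e.2) | e <- X].

Definition F (X : seq (rat * seq H)) : H :=
  flatten [seq scaleH e.1 (top_seq e.2) | e <- X].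

From mathcomp Require Import all_boot all_order all_algebra.
From mathcomp Require Import ring.
Set Implicit Arguments.
Unset Strict Implicit.
Unset Printing Implicit Defensive.
Import Order.TTheory GRing.Theory Num.Theory.
Local Open Scope ring_scope.

(* A formal combination is read as a finitely supported measure: two
   vectors are equal iff they have the same integral [integ x g] against every
   test function g constant on isomorphism classes, so every identity below is
   an identity between such integrals.
   The heart of the argument is that, for p primitive and Dtilde x = sum x' (x) x'',
     Dtilde (x top p) = x (x) p + sum x' (x) (x'' top p).
   It comes from the coproduct of a grafting sum sum_v N_v, from the fact that
   the two factors of each term of Delta N have total weight weight N (which
   absorbs the normalisation 1/weight N), and from Delta p = 1 (x) p + p (x) 1.
   By induction, Dtilde^k (p_i top ... top p_1) is the sum, over the
   decompositions of (p_i, ..., p_1) into k+1 nonempty consecutive blocks, of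
   the tensor products of the tops of the blocks: for k = i-1 only the
   decomposition into singletons remains, and for k >= i there is none.
   Injectivity of F_i follows, and Dtilde^(n-1) maps a relation
   c 1 + sum_(j <= n) F_j (X_j) = 0 to X_n = 0; directness follows by
   induction on n. *)

Definition integ (K : Type) (x : seq (rat * K)) (g : K -> rat) : rat :=
  \sum_(e <- x) e.1 * g e.2.

Section Integral.

Variable K : Type.

Implicit Types (x y : seq (rat * K)) (g h : K -> rat).

Lemma integ_nil g : integ [::] g = 0.
Proof. by rewrite /integ big_nil. Qed.

Lemma integ_cons e x g : integ (e :: x) g = e.1 * g e.2 + integ x g.
Proof. by rewrite /integ big_cons. Qed.

Lemma integ_cat x y g : integ (x ++ y) g = integ x g + integ y g.
Proof. by rewrite /integ big_cat. Qed.

Lemma integ_flatten (xs : seq (seq (rat * K))) g :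
  integ (flatten xs) g = \sum_(x <- xs) integ x g.
Proof. by rewrite /integ big_flatten. Qed.

Lemma eq_integ x g h : g =1 h -> integ x g = integ x h.
Proof. by move=> gh; apply: eq_bigr => e _; rewrite gh. Qed.

Lemma integD x g h : integ x (fun k => g k + h k) = integ x g + integ x h.
Proof. by rewrite /integ -big_split; apply: eq_bigr => e _; rewrite mulrDr. Qed.

Lemma integB x g h : integ x (fun k => g k - h k) = integ x g - integ x h.
Proof. by rewrite /integ -sumrB; apply: eq_bigr => e _; rewrite mulrBr. Qed.

Lemma integZ x c g : integ x (fun k => c * g k) = c * integ x g.
Proof. by rewrite /integ mulr_sumr; apply: eq_bigr => e _; rewrite mulrCA. Qed.

Lemma integZr x c g : integ x (fun k => g k * c) = integ x g * c.
Proof. by rewrite mulrC -integZ; apply: eq_integ => k; rewrite mulrC. Qed.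

Lemma integ0 x : integ x (fun _ => 0) = 0.
Proof. by rewrite /integ big1 // => e _; rewrite mulr0. Qed.

Lemma integ_scale c x g : integ [seq (c * e.1, e.2) | e <- x] g = c * integ x g.
Proof. by rewrite /integ big_map mulr_sumr; apply: eq_bigr => e _; rewrite mulrA. Qed.

Lemma integ_map (K' : Type) (f : K -> K') x (g : K' -> rat) :
  integ [seq (e.1, f e.2) | e <- x] g = integ x (fun k => g (f k)).
Proof. by rewrite /integ big_map. Qed.

Lemma integ_bind (K' : Type) (l : K -> seq (rat * K')) x (g : K' -> rat) :
  integ (flatten [seq [seq (e.1 * d.1, d.2) | d <- l e.2] | e <- x]) g =
  integ x (fun k => integ (l k) g).
Proof.
rewrite /integ big_flatten big_map; apply: eq_bigr => e _.
by rewrite big_map mulr_sumr; apply: eq_bigr => d _; rewrite mulrA.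
Qed.

Lemma integ_allpairs (K1 K2 : Type) (f : K1 -> K2 -> K) (x1 : seq (rat * K1))
    (x2 : seq (rat * K2)) g :
  integ [seq (e.1 * d.1, f e.2 d.2) | e <- x1, d <- x2] g =
  integ x1 (fun a => integ x2 (fun b => g (f a b))).
Proof.
rewrite /integ big_allpairs_dep; apply: eq_bigr => e _.
by rewrite mulr_sumr; apply: eq_bigr => d _; rewrite mulrA.
Qed.

Lemma exchange_integ (K2 : Type) x (y : seq (rat * K2)) (G : K -> K2 -> rat) :
  integ x (fun a => integ y (G a)) = integ y (fun b => integ x (G^~ b)).
Proof.
rewrite /integ; under eq_bigr do rewrite mulr_sumr.
rewrite exchange_big /=; apply: eq_bigr => d _.
by rewrite mulr_sumr; apply: eq_bigr => e _; rewrite !mulrA (mulrC e.1).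
Qed.

End Integral.

Lemma eq_in_integ (K : eqType) (x : seq (rat * K)) g h :
  (forall e, e \in x -> g e.2 = h e.2) -> integ x g = integ x h.
Proof. by move=> gh; apply: eq_big_seq => e ex; rewrite gh. Qed.

Section ClassDuality.

Variables (K C : eqType) (cl : K -> C).

Definition class_coef (x : seq (rat * K)) (b : K) : rat :=
  \sum_(e <- x | cl e.2 == cl b) e.1.

Definition class_fun (g : K -> rat) := forall a b, cl a = cl b -> g a = g b.

Lemma class_coefE x b : class_coef x b = integ x (fun a => (cl a == cl b)%:R).
Proof.
rewrite /class_coef /integ big_mkcond /=; apply: eq_bigr => e _.
by case: (_ == _); rewrite ?mulr1 ?mulr0.
Qed.

Lemma sum_pred1_uniq (U : seq C) (a : C) (G : C -> rat) :
  uniq U -> a \in U -> \sum_(c <- U | a == c) G c = G a.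
Proof.
move=> Uu aU; rewrite (big_rem a aU) eqxx big_seq_cond big_pred0 => [|c]; first exact: addr0.
by rewrite mem_rem_uniq // !inE eq_sym; case: (a == c); rewrite ?andbF.
Qed.

Lemma integ_class_expand (U : seq C) (rep : C -> K) x g :
  class_fun g -> uniq U -> {in U, forall c, cl (rep c) = c} ->
  {subset [seq cl e.2 | e <- x] <= U} ->
  integ x g = \sum_(c <- U) class_coef x (rep c) * g (rep c).
Proof.
move=> gP Uu repP sub.
transitivity (\sum_(e <- x) \sum_(c <- U | cl e.2 == c) e.1 * g (rep c)).
  apply: eq_big_seq => e ex; have clU : cl e.2 \in U by rewrite sub // map_f.
  by rewrite (sum_pred1_uniq (fun c => e.1 * g (rep c))) // (gP _ (rep (cl e.2))) ?repP.
rewrite (exchange_big_dep xpredT) //=; apply: eq_big_seq => c cU.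
by rewrite /class_coef mulr_suml; apply: eq_bigl => e /=; rewrite repP // eq_sym.
Qed.

Lemma class_coef_integ (k0 : K) x y : (forall b, class_coef x b = class_coef y b) ->
  forall g, class_fun g -> integ x g = integ y g.
Proof.
move=> xy g gP; pose ks := [seq e.2 | e <- x ++ y].
pose rep c := nth k0 ks (index c (map cl ks)).
have repP : {in undup (map cl ks), forall c, cl (rep c) = c}.
  move=> c; rewrite mem_undup => cin; rewrite /rep -(nth_map k0 (cl k0)) ?nth_index //.
  by rewrite -(size_map cl) index_mem.
have sub z : {subset z <= x ++ y} -> {subset [seq cl e.2 | e <- z] <= undup (map cl ks)}.
  by move=> zxy _ /mapP[e ez ->]; rewrite mem_undup -map_comp map_f ?zxy.
rewrite !(integ_class_expand gP (undup_uniq _) repP).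
- by apply: eq_bigr => c _; rewrite xy.
- by apply: sub => e ey; rewrite mem_cat ey orbT.
- by apply: sub => e ex; rewrite mem_cat ex.
Qed.

Lemma integ_class_coef x y : (forall g, class_fun g -> integ x g = integ y g) ->
  forall b, class_coef x b = class_coef y b.
Proof. by move=> xy b; rewrite !class_coefE; apply: xy => a a' ->. Qed.

End ClassDuality.

(** * Rooted trees up to isomorphism *)

Lemma rtree_nested_ind (P : rtree -> Prop) :
  (forall ts, (forall t, t \in ts -> P t) -> P (RNode ts)) -> forall t, P t.
Proof.
move=> IHnode; fix IH 1; case=> ts; apply: IHnode.
elim: ts => [|u ts IHts] t; first (rewrite in_nil; discriminate).
rewrite inE => /orP[/eqP->|]; [exact: (IH u) | exact: IHts].
Qed.

Lemma forest_ind (P : forest -> Prop) :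
  P [::] -> (forall ts N, P ts -> P N -> P (RNode ts :: N)) -> forall N, P N.
Proof.
move=> P0 Pcons N; have [n] := ubnP (fweight N); elim: n N => // n IH [|[ts] N] // wN.
rewrite /fweight /= -/(fweight ts) -/(fweight N) ltnS in wN.
by apply: Pcons; apply: IH; apply: leq_trans wN; rewrite ?addSn ltnS ?leq_addr ?leq_addl.
Qed.

Lemma tle_total : total tle.
Proof. by move=> a b; rewrite /tle leq_total. Qed.

Lemma tle_trans : transitive tle.
Proof. by move=> a b c; rewrite /tle; apply: leq_trans. Qed.

Lemma tle_anti : antisymmetric tle.
Proof. by move=> a b; rewrite /tle -eqn_leq => /eqP /(pcan_inj pickleK_inv). Qed.

Lemma fcanonP a b : fcanon a = fcanon b <-> perm_eq (map canon a) (map canon b).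
Proof. exact: rwP (perm_sortP tle_total tle_trans tle_anti _ _). Qed.

Lemma canon_RNode f : canon (RNode f) = RNode (fcanon f).
Proof. by []. Qed.

Lemma fcanon1 t : fcanon [:: t] = [:: canon t].
Proof. by []. Qed.

Lemma fcanonK_in f : {in map canon f, forall t, canon t = t} -> fcanon (fcanon f) = fcanon f.
Proof.
move=> canon_id; rewrite /fcanon.
have -> : map canon (sort tle (map canon f)) = sort tle (map canon f).
  by rewrite -[RHS]map_id; apply/eq_in_map => t; rewrite mem_sort => /canon_id.
by apply: sorted_sort; [exact: tle_trans | exact: sort_sorted tle_total _].
Qed.

Lemma canonK t : canon (canon t) = canon t.
Proof.
elim/rtree_nested_ind: t => ts IH; rewrite !canon_RNode fcanonK_in // => _ /mapP[u uts ->].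
exact: IH.
Qed.

Lemma fcanonK f : fcanon (fcanon f) = fcanon f.
Proof. by apply: fcanonK_in => _ /mapP[t _ ->]; apply: canonK. Qed.

Lemma fcanon_cat a a' b b' : fcanon a = fcanon a' -> fcanon b = fcanon b' ->
  fcanon (a ++ b) = fcanon (a' ++ b').
Proof. by move=> /fcanonP aa' /fcanonP bb'; apply/fcanonP; rewrite !map_cat perm_cat. Qed.

Lemma fcanon_catC a b : fcanon (a ++ b) = fcanon (b ++ a).
Proof. by apply/fcanonP; rewrite !map_cat perm_catC. Qed.

Lemma fcanon_eq_nil f : (fcanon f == [::]) = (f == [::]).
Proof. by case: f => //= t f; rewrite /fcanon -size_eq0 size_sort. Qed.

Lemma fcanon_RNode f f' : fcanon f = fcanon f' -> fcanon [:: RNode f] = fcanon [:: RNode f'].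
Proof. by rewrite !fcanon1 !canon_RNode => ->. Qed.

Lemma fcanon_nth (a b : seq forest) i : map fcanon a = map fcanon b ->
  fcanon (nth [::] a i) = fcanon (nth [::] b i).
Proof.
move=> ab; have sz : size a = size b by rewrite -(size_map fcanon) ab size_map.
case: (ltnP i (size a)) => ia; first by rewrite -!(nth_map [::] [::]) -?sz // ab.
by rewrite !nth_default // -sz.
Qed.

Lemma weight_canon t : weight (canon t) = weight t.
Proof.
elim/rtree_nested_ind: t => ts IH /=; congr S.
rewrite (perm_sumn (perm_map weight (permEl (perm_sort tle _)))) -map_comp.
by congr sumn; apply/eq_in_map => u uts /=; rewrite IH.
Qed.

Lemma fweight_canon a b : fcanon a = fcanon b -> fweight a = fweight b.
Proof.
have wc f : fweight f = sumn (map weight (map canon f)).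
  by rewrite -map_comp /fweight; congr sumn; apply: eq_map => t /=; rewrite weight_canon.
by move=> /fcanonP ab; rewrite !wc; apply/perm_sumn/perm_map.
Qed.

Lemma fweight_cat a b : fweight (a ++ b) = (fweight a + fweight b)%N.
Proof. by rewrite /fweight map_cat sumn_cat. Qed.

Lemma fweight_eq0 f : (fweight f == 0%N) = (f == [::]).
Proof. by case: f => [|[ts] f] //; rewrite /fweight /= addSn. Qed.

Definition invH (g : forest -> rat) := class_fun fcanon g.
Definition invT (g : seq forest -> rat) := class_fun (map fcanon) g.

Lemma eqH_integ x y : eqH x y <-> forall g, invH g -> integ x g = integ y g.
Proof. by split=> [xy|]; [apply: class_coef_integ [::] _ _ xy | apply: integ_class_coef]. Qed.

Lemma eqT_integ x y : eqT x y <-> forall g, invT g -> integ x g = integ y g.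
Proof. by split=> [xy|]; [apply: class_coef_integ [::] _ _ xy | apply: integ_class_coef]. Qed.

(** * The coproduct *)

Notation d0 a := (nth [::] a 0).
Notation d1 a := (nth [::] a 1).

Lemma size_Delta_tree t e : e \in Delta_tree t -> size e.2 = 2%N.
Proof. by rewrite /Delta_tree !inE => /orP[/eqP->|/orP[/eqP->|/mapP[C _ ->]]]. Qed.

Lemma size_Delta_forest f e : e \in Delta_forest f -> size e.2 = 2%N.
Proof.
elim: f e => [|t f IH] e /=; first by rewrite inE => /eqP->.
case/allpairsP=> [[a b] [/= /size_Delta_tree sa /IH sb ->]] /=.
by rewrite size_map size_zip sa sb.
Qed.

Lemma integ_Delta_forest2 f g :
  integ (Delta_forest f) g = integ (Delta_forest f) (fun a => g [:: d0 a; d1 a]).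
Proof. by apply: eq_in_integ => -[c a] /size_Delta_forest; case: a => [|? [|? []]]. Qed.

Lemma integ_Delta_forest_nil g : integ (Delta_forest [::]) g = g [:: [::]; [::]].
Proof. by rewrite /= integ_cons integ_nil mul1r addr0. Qed.

Lemma integ_Delta_forest_cons t f g : integ (Delta_forest (t :: f)) g =
  integ (Delta_tree t) (fun a => integ (Delta_forest f)
    (fun b => g [:: d0 a ++ d0 b; d1 a ++ d1 b])).
Proof.
rewrite /= -/(Delta_forest f) (integ_allpairs (fun a b => [seq p.1 ++ p.2 | p <- zip a b])).
apply: eq_in_integ => -[c a] /size_Delta_tree /= sa.
apply: eq_in_integ => -[c' b] /size_Delta_forest /= sb.
by case: a sa => [|? [|? []]] //; case: b sb => [|? [|? []]].
Qed.

Lemma integ_Delta_forest_cat A B g : integ (Delta_forest (A ++ B)) g =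
  integ (Delta_forest A) (fun a => integ (Delta_forest B)
    (fun b => g [:: d0 a ++ d0 b; d1 a ++ d1 b])).
Proof.
elim: A g => [|t A IH] g; first by rewrite integ_Delta_forest_nil -integ_Delta_forest2.
rewrite /= !integ_Delta_forest_cons; apply: eq_integ => a; rewrite IH.
by apply: eq_integ => a'; apply: eq_integ => b; rewrite !catA.
Qed.

Lemma integ_Delta_forest1 t g : integ (Delta_forest [:: t]) g = integ (Delta_tree t) g.
Proof.
rewrite integ_Delta_forest_cons; apply: eq_in_integ => -[c a] /size_Delta_tree /=.
by rewrite integ_Delta_forest_nil !cats0; case: a => [|? [|? []]].
Qed.

Fixpoint child_vertices (n : nat) (us : seq rtree) : seq (seq nat) :=
  if us is u :: us' then map (cons n) (vertices u) ++ child_vertices n.+1 us' else [::].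

Lemma verticesE ts : vertices (RNode ts) = [::] :: child_vertices 0 ts.
Proof. by congr cons; elim: ts 0%N => //= u us IH n; rewrite IH. Qed.

Lemma child_vertices_head n us v :
  v \in child_vertices n us -> (v != [::]) && (n <= head 0%N v)%N.
Proof.
elim: us n => [|u us IH] n //=; rewrite mem_cat => /orP[/mapP[w _ ->]|/IH] //=.
by case/andP => -> /ltnW.
Qed.

Lemma edgesE ts : edges (RNode ts) = child_vertices 0 ts.
Proof.
by rewrite /edges verticesE /=; apply/all_filterP/allP => v /child_vertices_head/andP[].
Qed.

Lemma vertices_edges u : vertices u = [::] :: edges u.
Proof. by case: u => ts; rewrite edgesE verticesE. Qed.

Lemma edges_neq_nil u e : e \in edges u -> e != [::].
Proof. by case: u => ts; rewrite edgesE => /child_vertices_head/andP[]. Qed.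

Fixpoint prune_children (C : seq (seq nat)) (i : nat) (us : seq rtree) : seq rtree :=
  match us with
  | [::] => [::]
  | u :: us' =>
      if [:: i] \in C then prune_children C i.+1 us'
      else prune u [seq behead c | c <- C & (c != [::]) && (head 0%N c == i)]
             :: prune_children C i.+1 us'
  end.

Lemma pruneE ts C : prune (RNode ts) C = RNode (prune_children C 0 ts).
Proof.
rewrite /=; congr RNode; generalize 0%N at 2 3.
by elim: ts => //= u us IH n; rewrite IH.
Qed.

Lemma prune_nil t : prune t [::] = t.
Proof.
elim/rtree_nested_ind: t => ts IH; rewrite pruneE; congr RNode.
elim: ts 0%N IH => //= u us IHus n IH; rewrite IH ?inE ?eqxx // IHus // => t tus.
by apply: IH; rewrite inE tus orbT.
Qed.

Lemma prune_children_catl X Y m us :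
  (forall c, c \in X -> (c != [::]) && (head 0%N c < m)%N) ->
  prune_children (X ++ Y) m us = prune_children Y m us.
Proof.
elim: us m => [|u us IH] m X_lt //=.
have -> : ([:: m] \in X ++ Y) = ([:: m] \in Y).
  by rewrite mem_cat; case: ([:: m] \in X) / boolP => // /X_lt /=; rewrite ltnn.
rewrite IH; last by move=> c /X_lt /andP[-> /ltnW].
rewrite filter_cat (@eq_in_filter _ _ pred0 X) ?filter_pred0 //.
by move=> c /X_lt /andP[-> lt] /=; apply/negbTE/eqP => e; rewrite e ltnn in lt.
Qed.

Definition child_subtree (n : nat) (ts : seq rtree) (c : seq nat) : rtree :=
  subtree (nth leaf ts (head 0%N c - n)) (behead c).

Lemma PC_RNode ts C : (forall c, c \in C -> c != [::]) ->
  PC (RNode ts) C = map (child_subtree 0 ts) C.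
Proof. by move=> C_nil; apply/eq_in_map => -[|i p] /C_nil //= _; rewrite /child_subtree subn0. Qed.

Lemma mem_subseqs (T : eqType) (s : seq T) C : C \in subseqs s -> subseq C s.
Proof.
elim: s C => [|x s IH] C /=; first by rewrite inE => /eqP->.
rewrite mem_cat => /orP[/mapP[D /IH sD ->]|/IH sC]; first by rewrite /= eqxx.
exact: (subseq_trans sC (subseq_cons s x)).
Qed.

Lemma subseqs_map (T T' : Type) (f : T -> T') s :
  subseqs (map f s) = map (map f) (subseqs s).
Proof. by elim: s => //= x s ->; rewrite map_cat -!map_comp. Qed.

Lemma sum_subseqs_cat (T : Type) (A B : seq T) (phi : seq T -> rat) :
  \sum_(C <- subseqs (A ++ B)) phi C =
  \sum_(C1 <- subseqs A) \sum_(C2 <- subseqs B) phi (C1 ++ C2).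
Proof.
elim: A phi => [|x A IH] phi /=; first by rewrite big_cons big_nil addr0.
by rewrite !big_cat !big_map /= IH (IH phi).
Qed.

Lemma sum_subseqs_nil (T : Type) (s : seq T) (phi : seq T -> rat) :
  \sum_(D <- subseqs s | nilp D) phi D = phi [::].
Proof.
elim: s => [|x s IH] /=; first by rewrite big_cons big_nil addr0.
by rewrite big_cat big_map /= big_pred0 ?add0r.
Qed.

Lemma prefix_head (c v : seq nat) : prefix c v -> c != [::] -> v != [::] ->
  head 0%N c = head 0%N v.
Proof. by case: c => // x c; case: v => // y v /= /andP[/eqP ->]. Qed.

(* Edges are named by their lower vertex; in a forest, the "edge" [:: j] above
   the root of its j-th tree may be cut too, which detaches that whole tree. *)
Definition at_most_one_cut (V C : seq (seq nat)) : bool :=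
  all (fun v => count (fun c => prefix c v) C <= 1)%N V.

Lemma at_most_one_cut_cat A B X :
  at_most_one_cut (A ++ B) X = at_most_one_cut A X && at_most_one_cut B X.
Proof. by rewrite /at_most_one_cut all_cat. Qed.

Lemma at_most_one_cut_map n V C :
  at_most_one_cut (map (cons n) V) (map (cons n) C) = at_most_one_cut V C.
Proof.
rewrite /at_most_one_cut all_map; apply: eq_all => v /=; rewrite count_map.
by congr (_ <= _)%N; apply: eq_count => c /=; rewrite eqxx.
Qed.

Lemma at_most_one_cut_uniq E C : subseq C E -> at_most_one_cut E C -> uniq C.
Proof.
move=> sCE cut1; apply: count_mem_uniq => x.
case: (boolP (x \in C)) => xC; last by apply/count_memPn.
have /= le1 := allP cut1 x (mem_subseq sCE xC).
apply/eqP; rewrite eqn_leq -has_count has_pred1 xC andbT.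
by apply: leq_trans le1; apply: sub_count => c /= /eqP ->; exact: prefix_refl.
Qed.

Lemma sum_cuts_root (E : seq (seq nat)) (phi : seq (seq nat) -> rat) :
  (forall e, e \in E -> e != [::]) ->
  \sum_(D <- subseqs ([::] :: E) | at_most_one_cut ([::] :: E) D) phi D =
  phi [:: [::]] + \sum_(D <- subseqs E | at_most_one_cut E D) phi D.
Proof.
move=> E_nil /=; rewrite big_cat big_map /=; congr (_ + _).
  rewrite -(sum_subseqs_nil E (fun D => phi ([::] :: D))).
  rewrite [LHS]big_seq_cond [RHS]big_seq_cond; apply: eq_bigl => D.
  case: (boolP (D \in subseqs E)) => //= /mem_subseqs sDE.
  case: D sDE => [|d D] sDE.
    by apply/allP => v _ /=; case: (prefix [::] v).
  apply/negbTE/nandP; right; apply/allPn; exists d.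
    by apply: (mem_subseq sDE); rewrite mem_head.
  by rewrite /= prefix0s prefix_refl.
rewrite [LHS]big_seq_cond [RHS]big_seq_cond; apply: eq_bigl => D.
case: (boolP (D \in subseqs E)) => //= /mem_subseqs sDE.
rewrite /at_most_one_cut /= (@eq_in_count _ _ pred0) ?count_pred0 //.
by move=> -[|? ?] /(mem_subseq sDE) /E_nil.
Qed.

(* The empty cut accounts for the term 1 (x) u. *)
Lemma integ_Delta_tree u h :
  integ (Delta_tree u) h = h [:: [:: u]; [::]] +
    \sum_(D <- subseqs (edges u) | at_most_one_cut (edges u) D) h [:: PC u D; [:: RC u D]].
Proof.
rewrite /Delta_tree integ_cat !integ_cons integ_nil !mul1r addr0 /integ big_map /adm_cuts.
rewrite big_filter [X in _ = _ + X](bigID (@nilp _)) /=.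
have -> : \sum_(D <- subseqs (edges u) | at_most_one_cut (edges u) D && nilp D)
    h [:: PC u D; [:: RC u D]] = h [:: [::]; [:: u]].
  rewrite (eq_bigl (@nilp _)); last by move=> [|c D] /=; rewrite ?andbF ?andbT //; apply/allP.
  by rewrite (sum_subseqs_nil _ (fun D => h [:: PC u D; [:: RC u D]])) /RC prune_nil.
rewrite -addrA [in RHS]addrCA; congr (_ + (_ + _)).
rewrite [LHS]big_seq_cond [RHS]big_seq_cond; apply: eq_big => [D|D _]; last by rewrite mul1r.
case: (boolP (D \in subseqs (edges u))) => //= /mem_subseqs sD.
have D_nil c : c \in D -> c != [::] by move=> /(mem_subseq sD) /edges_neq_nil.
rewrite /admissible.
have -> : all (fun c => c \in edges u) D by apply/allP => c /(mem_subseq sD).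
rewrite vertices_edges /=.
rewrite (@eq_in_count _ _ pred0) ?count_pred0 => [|[|? ?] /D_nil] //.
rewrite -/(at_most_one_cut (edges u) D).
case: (boolP (at_most_one_cut (edges u) D)) => cut1 /=; last by rewrite !andbF.
by rewrite (at_most_one_cut_uniq sD cut1) andbT; case: D {sD D_nil cut1}.
Qed.

Section CutsCons.

Variables (n : nat) (u : rtree) (us : seq rtree) (D C2 : seq (seq nat)).
Hypothesis sC2 : {subset C2 <= child_vertices n.+1 us}.

Let C2_head c : c \in C2 -> (c != [::]) && (n.+1 <= head 0%N c)%N.
Proof. by move=> /sC2 /child_vertices_head. Qed.

Lemma at_most_one_cut_cons :
  at_most_one_cut (map (cons n) (vertices u) ++ child_vertices n.+1 us) (map (cons n) D ++ C2)
  = at_most_one_cut (vertices u) D && at_most_one_cut (child_vertices n.+1 us) C2.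
Proof.
rewrite at_most_one_cut_cat -(at_most_one_cut_map n (vertices u) D); congr (_ && _).
  apply: eq_in_all => _ /mapP[w _ ->].
  rewrite count_cat (@eq_in_count _ _ pred0 C2) ?count_pred0 ?addn0 //.
  move=> c /C2_head /andP[cn hc]; apply/negbTE/negP => /prefix_head /(_ cn isT) /= e.
  by rewrite e ltnn in hc.
apply: eq_in_all => v /child_vertices_head /andP[vn hv].
rewrite count_cat (@eq_in_count _ _ pred0 (map (cons n) D)) ?count_pred0 ?add0n //.
move=> _ /mapP[d _ ->]; apply/negbTE/negP => /prefix_head /(_ isT vn) /= e.
by rewrite -e ltnn in hv.
Qed.

Lemma child_subtree_cons :
  map (child_subtree n (u :: us)) (map (cons n) D ++ C2) =
  map (subtree u) D ++ map (child_subtree n.+1 us) C2.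
Proof.
rewrite map_cat -map_comp; congr (_ ++ _).
  by apply: eq_map => d /=; rewrite /child_subtree /= subnn.
apply/eq_in_map => c /C2_head; case: c => // m p /= hm.
by rewrite /child_subtree /= -[(m - n)%N]prednK ?subn_gt0 // -subnS.
Qed.

Lemma prune_children_cons :
  prune_children (map (cons n) D ++ C2) n (u :: us) =
  (if [::] \in D then [::] else [:: prune u D]) ++ prune_children C2 n.+1 us.
Proof.
rewrite /= prune_children_catl; last by move=> _ /mapP[d _ ->] /=.
have -> : ([:: n] \in map (cons n) D ++ C2) = ([::] \in D).
  rewrite mem_cat (mem_map (fun a b (e : n :: a = n :: b) => congr1 behead e)).
  by case: ([:: n] \in C2) / boolP => [/C2_head /=|]; rewrite ?ltnn ?orbF.
case: ([::] \in D) => //=.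
rewrite filter_cat (@eq_in_filter _ _ pred0 C2) ?filter_pred0; last first.
  by move=> c /C2_head /andP[-> hc] /=; apply/negbTE/eqP => e; rewrite e ltnn in hc.
rewrite cats0 (@eq_in_filter _ _ predT) ?filter_predT; last first.
  by move=> _ /mapP[d _ ->] /=; rewrite eqxx.
by rewrite -map_comp map_id.
Qed.

End CutsCons.

(* Cuts of the forest [ts] (its trees placed at positions n, n+1, ...) that
   may detach whole trees enumerate the terms of [Delta_forest ts]. *)
Lemma sum_forest_cuts n ts (G : forest -> forest -> rat) :
  \sum_(C <- subseqs (child_vertices n ts) | at_most_one_cut (child_vertices n ts) C)
     G (map (child_subtree n ts) C) (prune_children C n ts)
  = integ (Delta_forest ts) (fun a => G (d0 a) (d1 a)).
Proof.
elim: ts n G => [|u us IH] n G; first by rewrite /= big_cons big_nil integ_Delta_forest_nil addr0.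
rewrite integ_Delta_forest_cons integ_Delta_tree [child_vertices n _]/= big_mkcond.
rewrite sum_subseqs_cat subseqs_map big_map.
transitivity (\sum_(D <- subseqs (vertices u) | at_most_one_cut (vertices u) D)
   \sum_(C2 <- subseqs (child_vertices n.+1 us) | at_most_one_cut (child_vertices n.+1 us) C2)
     G (map (subtree u) D ++ map (child_subtree n.+1 us) C2)
       ((if [::] \in D then [::] else [:: prune u D]) ++ prune_children C2 n.+1 us)).
  rewrite [RHS]big_mkcond; apply: eq_big_seq => D _.
  case: (boolP (at_most_one_cut (vertices u) D)) => cutD; last first.
    apply: big1_seq => C2 /mem_subseqs/mem_subseq sC2.
    by rewrite at_most_one_cut_cons // (negbTE cutD).
  rewrite [RHS]big_mkcond; apply: eq_big_seq => C2 /mem_subseqs/mem_subseq sC2.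
  by rewrite at_most_one_cut_cons // cutD child_subtree_cons // prune_children_cons.
rewrite vertices_edges sum_cuts_root; last exact: edges_neq_nil.
congr (_ + _); first exact: (IH n.+1 (fun P R => G (u :: P) R)).
rewrite [LHS]big_seq_cond [RHS]big_seq_cond; apply: eq_bigr => D /andP[/mem_subseqs sD _].
have -> : ([::] \in D) = false by apply/negP => /(mem_subseq sD) /edges_neq_nil.
exact: (IH n.+1 (fun P R => G (map (subtree u) D ++ P) (prune u D :: R))).
Qed.

Lemma integ_Delta_RNode ts h :
  integ (Delta_tree (RNode ts)) h = h [:: [:: RNode ts]; [::]] +
    integ (Delta_forest ts) (fun a => h [:: d0 a; [:: RNode (d1 a)]]).
Proof.
rewrite integ_Delta_tree edgesE -(sum_forest_cuts 0 ts (fun P R => h [:: P; [:: RNode R]])).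
congr (_ + _); rewrite [LHS]big_seq_cond [RHS]big_seq_cond.
apply: eq_bigr => C /andP[/mem_subseqs sC _].
by rewrite /RC pruneE PC_RNode // => c /(mem_subseq sC) /child_vertices_head /andP[].
Qed.

Lemma integ_Delta_forest_RNode ts h :
  integ (Delta_forest [:: RNode ts]) h = h [:: [:: RNode ts]; [::]] +
    integ (Delta_forest ts) (fun a => h [:: d0 a; [:: RNode (d1 a)]]).
Proof. by rewrite integ_Delta_forest1 integ_Delta_RNode. Qed.

(** * Grafting sums *)

Lemma set_nth_catl (T : Type) (x0 : T) (A B : seq T) j y : (j < size A)%N ->
  set_nth x0 (A ++ B) j y = set_nth x0 A j y ++ B.
Proof. by elim: A j => [|a A IH] [|j] //= ltjA; rewrite IH. Qed.

Lemma set_nth_catr (T : Type) (x0 : T) (A B : seq T) j y :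
  set_nth x0 (A ++ B) (size A + j) y = A ++ set_nth x0 B j y.
Proof. by elim: A => [|a A IH] //=; rewrite IH. Qed.

Lemma sum_child_vertices n ts (G : seq nat -> rat) :
  \sum_(v <- child_vertices n ts) G v =
  \sum_(j <- iota n (size ts)) \sum_(p <- vertices (nth leaf ts (j - n))) G (j :: p).
Proof.
elim: ts n => [|u us IH] n /=; first by rewrite !big_nil.
rewrite big_cat big_cons big_map subnn /= IH; congr (_ + _).
apply: eq_big_seq => j; rewrite mem_iota => /andP[ltnj _].
by rewrite -[(j - n)%N]prednK ?subn_gt0 // -subnS.
Qed.

Definition graft_sum (M N : forest) (phi : forest -> rat) : rat :=
  \sum_(v <- fvertices N) phi (graftF N v M).

Lemma graft_sumE M N phi : graft_sum M N phi =
  \sum_(j <- iota 0 (size N)) \sum_(p <- vertices (nth leaf N j)) phi (graftF N (j, p) M).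
Proof.
by rewrite /graft_sum /fvertices big_flatten big_map; apply: eq_bigr => j _; rewrite big_map.
Qed.

Lemma eq_graft_sum M N phi psi : phi =1 psi -> graft_sum M N phi = graft_sum M N psi.
Proof. by move=> e; apply: eq_bigr => v _; rewrite e. Qed.

Lemma graft_sumD M N phi psi :
  graft_sum M N (fun x => phi x + psi x) = graft_sum M N phi + graft_sum M N psi.
Proof. by rewrite /graft_sum big_split. Qed.

Lemma graft_sumB M N phi psi :
  graft_sum M N (fun x => phi x - psi x) = graft_sum M N phi - graft_sum M N psi.
Proof. by rewrite /graft_sum sumrB. Qed.

Lemma graft_sum_integ M N (K : Type) (x : seq (rat * K)) (G : forest -> K -> rat) :
  graft_sum M N (fun f => integ x (G f)) = integ x (fun k => graft_sum M N (G^~ k)).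
Proof. by rewrite /graft_sum /integ exchange_big /=; apply: eq_bigr => e _; rewrite mulr_sumr. Qed.

Lemma graft_sum_nilr M phi : graft_sum M [::] phi = 0.
Proof. by rewrite /graft_sum /fvertices big_nil. Qed.

Lemma graft_sum_cat M A B phi : graft_sum M (A ++ B) phi =
  graft_sum M A (fun x => phi (x ++ B)) + graft_sum M B (fun y => phi (A ++ y)).
Proof.
rewrite !graft_sumE size_cat iotaD big_cat /= add0n; congr (_ + _).
  apply: eq_big_seq => j; rewrite mem_iota add0n => /andP[_ ltjA].
  by rewrite nth_cat ltjA; apply: eq_bigr => p _; rewrite /graftF /= nth_cat ltjA set_nth_catl.
rewrite -[in LHS](addn0 (size A)) iotaDl big_map; apply: eq_bigr => j _.
rewrite nth_cat ltnNge leq_addr /= addKn; apply: eq_bigr => p _.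
by rewrite /graftF /= nth_cat ltnNge leq_addr /= addKn set_nth_catr.
Qed.

Lemma graft_sum_RNode M ts phi : graft_sum M [:: RNode ts] phi =
  phi [:: RNode (ts ++ M)] + graft_sum M ts (fun y => phi [:: RNode y]).
Proof.
rewrite graft_sumE /= big_cons big_nil addr0 verticesE big_cons /=; congr (_ + _).
by rewrite sum_child_vertices graft_sumE; apply: eq_bigr => j _; rewrite subn0.
Qed.

Lemma graft_sum_nill N phi : graft_sum [::] N phi = (fweight N)%:R * phi N.
Proof.
elim/forest_ind: N phi => [|ts N IHts IHN] phi; first by rewrite graft_sum_nilr mul0r.
rewrite -cat1s graft_sum_cat graft_sum_RNode cats0 IHts IHN /= /fweight /=.
rewrite -/(fweight ts) -/(fweight N) !natrD -addn1 natrD; ring.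
Qed.

Lemma graftF_neq_nil N v M : graftF N v M != [::].
Proof. by rewrite /graftF -size_eq0 size_set_nth -lt0n leq_max ltn0Sn. Qed.

Definition sing (f : forest) : H := [:: (1, f)].

Lemma integ_sing f phi : integ (sing f) phi = phi f.
Proof. by rewrite /sing integ_cons integ_nil mul1r addr0. Qed.

Lemma integ_topH x y phi : integ (topH x y) phi =
  integ x (fun m => integ y (fun n => (fweight n)%:R^-1 * graft_sum m n phi)).
Proof.
rewrite /topH integ_flatten big_allpairs_dep /integ; apply: eq_bigr => e _.
rewrite mulr_sumr; apply: eq_bigr => d _; rewrite -/(integ _ _) /scaleH integ_scale.
case: d.2 => [|t N]; first by rewrite /= integ_nil graft_sum_nilr !mulr0.
by rewrite /top_forest /integ big_map /graft_sum -mulr_sumr !mulrA.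
Qed.

Lemma integ_topH_sing m y phi : integ (topH (sing m) y) phi =
  integ y (fun n => (fweight n)%:R^-1 * graft_sum m n phi).
Proof. by rewrite integ_topH integ_sing. Qed.

(** * Isomorphism invariance *)

Section ForestCongruence.

Variable R : forest -> forest -> Prop.
Hypothesis R_refl : forall f, R f f.
Hypothesis R_sym : forall f g, R f g -> R g f.
Hypothesis R_trans : forall f g h, R f g -> R g h -> R f h.
Hypothesis R_cat : forall a a' b b', R a a' -> R b b' -> R (a ++ b) (a' ++ b').
Hypothesis R_catC : forall a b, R (a ++ b) (b ++ a).

Lemma cong_perm s s' : perm_eq s s' -> R s s'.
Proof.
elim: s s' => [|x s IH] s' ss'; first by move: ss'; rewrite perm_sym => /perm_nilP ->.
have xs' : x \in s' by rewrite -(perm_mem ss') mem_head.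
move: ss'; case/splitPr: xs' => s1 s2 ss'; have s_s12 : perm_eq s (s1 ++ s2).
  by rewrite -(perm_cons x) (perm_trans ss') // -cat1s perm_catCA.
apply: (R_trans (g := [:: x] ++ (s1 ++ s2))).
  by rewrite -cat1s; apply: R_cat => //; apply: IH.
have -> : s1 ++ x :: s2 = (s1 ++ [:: x]) ++ s2 by rewrite -catA.
by rewrite catA; apply: R_cat.
Qed.

Lemma cong_map_canon f : (forall t, t \in f -> R [:: t] [:: canon t]) -> R f (map canon f).
Proof.
elim: f => [|t f IH] Rt //=; rewrite -cat1s -[_ :: map canon f]cat1s.
by apply: R_cat; [apply: Rt; rewrite mem_head | apply: IH => u uf; apply: Rt; rewrite inE uf orbT].
Qed.

Lemma cong_fcanonK f : (forall t, t \in f -> R [:: t] [:: canon t]) -> R f (fcanon f).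
Proof.
by move=> Rt; apply: (R_trans (cong_map_canon Rt)); apply: cong_perm; rewrite perm_sym perm_sort.
Qed.

Lemma cong_fcanon f f' : (forall t, R [:: t] [:: canon t]) -> fcanon f = fcanon f' -> R f f'.
Proof.
move=> Rt ff'; apply: (R_trans (cong_fcanonK (fun t _ => Rt t))).
by rewrite ff'; apply/R_sym/cong_fcanonK.
Qed.

End ForestCongruence.

Lemma invT_catl (x : seq forest) g : invT g ->
  invT (fun y => g [:: d0 x ++ d0 y; d1 x ++ d1 y]).
Proof.
move=> gP a b /fcanon_nth ab; apply: gP => /=.
by rewrite (fcanon_cat (erefl _) (ab 0%N)) (fcanon_cat (erefl _) (ab 1%N)).
Qed.

Lemma invT_catr (y : seq forest) g : invT g ->
  invT (fun x => g [:: d0 x ++ d0 y; d1 x ++ d1 y]).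
Proof.
move=> gP a b /fcanon_nth ab; apply: gP => /=.
by rewrite (fcanon_cat (ab 0%N) (erefl _)) (fcanon_cat (ab 1%N) (erefl _)).
Qed.

Definition same_Delta (f f' : forest) := forall g, invT g ->
  integ (Delta_forest f) g = integ (Delta_forest f') g.

Lemma same_Delta_cat a a' b b' :
  same_Delta a a' -> same_Delta b b' -> same_Delta (a ++ b) (a' ++ b').
Proof.
move=> aa' bb' g gP; rewrite !integ_Delta_forest_cat.
under eq_integ => x do rewrite (bb' _ (invT_catl x gP)).
by apply: aa' => x x' xx'; apply: eq_integ => y; apply: invT_catr.
Qed.

Lemma same_Delta_catC a b : same_Delta (a ++ b) (b ++ a).
Proof.
move=> g gP; rewrite !integ_Delta_forest_cat exchange_integ.
apply: eq_integ => y; apply: eq_integ => x.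
by apply: gP => /=; rewrite fcanon_catC (fcanon_catC (d1 x)).
Qed.

Lemma same_Delta_canon t : same_Delta [:: t] [:: canon t].
Proof.
elim/rtree_nested_ind: t => ts IH g gP.
have ts_fcanon : same_Delta ts (fcanon ts).
  apply: cong_fcanonK IH => [f h hP //|f1 f2 f3 f12 f23 h hP||].
  - by rewrite f12 // f23.
  - exact: same_Delta_cat.
  - exact: same_Delta_catC.
rewrite !integ_Delta_forest1 canon_RNode !integ_Delta_RNode; congr (_ + _).
  by apply: gP => /=; rewrite (@fcanon_RNode _ (fcanon ts)) ?fcanonK.
apply: ts_fcanon => a b /fcanon_nth ab; apply: gP => /=.
by rewrite (ab 0%N) (fcanon_RNode (ab 1%N)).
Qed.

Lemma Delta_forest_inv f f' : fcanon f = fcanon f' -> same_Delta f f'.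
Proof.
apply: cong_fcanon same_Delta_canon => [f1 g gP //|f1 f2 f12 g gP|f1 f2 f3 f12 f23 g gP||].
- by rewrite f12.
- by rewrite f12 // f23.
- exact: same_Delta_cat.
- exact: same_Delta_catC.
Qed.

Definition same_grafts (M : forest) (f f' : forest) := fcanon f = fcanon f' /\
  forall phi, invH phi -> graft_sum M f phi = graft_sum M f' phi.

Lemma same_grafts_cat M a a' b b' :
  same_grafts M a a' -> same_grafts M b b' -> same_grafts M (a ++ b) (a' ++ b').
Proof.
move=> [ca aa'] [cb bb']; split=> [|phi phiP]; first exact: fcanon_cat.
rewrite !graft_sum_cat aa' ?bb' => [|x y xy|x y xy]; try by apply: phiP; apply: fcanon_cat.
by congr (_ + _); apply: eq_bigr => v _; apply: phiP; apply: fcanon_cat.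
Qed.

Lemma same_grafts_catC M a b : same_grafts M (a ++ b) (b ++ a).
Proof.
split=> [|phi phiP]; first exact: fcanon_catC.
by rewrite !graft_sum_cat addrC; congr (_ + _); apply: eq_bigr => v _;
  apply: phiP; exact: fcanon_catC.
Qed.

Lemma same_grafts_refl M f : same_grafts M f f.
Proof. by []. Qed.

Lemma same_grafts_sym M f g : same_grafts M f g -> same_grafts M g f.
Proof. by move=> [fg fgP]; split=> // phi phiP; rewrite fgP. Qed.

Lemma same_grafts_trans M f g h : same_grafts M f g -> same_grafts M g h -> same_grafts M f h.
Proof. by move=> [fg fgP] [gh ghP]; split=> [|phi phiP]; rewrite ?fg ?fgP ?ghP. Qed.

Lemma same_grafts_canon M t : same_grafts M [:: t] [:: canon t].
Proof.
elim/rtree_nested_ind: t => ts IH; split=> [|phi phiP]; first by rewrite !fcanon1 canonK.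
have [_ ts_fcanon] : same_grafts M ts (fcanon ts).
  exact: cong_fcanonK (@same_grafts_refl M) (@same_grafts_trans M) (@same_grafts_cat M)
    (@same_grafts_catC M) _ IH.
rewrite canon_RNode !graft_sum_RNode; congr (_ + _).
  by apply: phiP; apply: fcanon_RNode; apply: fcanon_cat; rewrite ?fcanonK.
by apply: ts_fcanon => x y xy; apply: phiP; exact: fcanon_RNode.
Qed.

Lemma graft_sum_inv M N N' phi : fcanon N = fcanon N' -> invH phi ->
  graft_sum M N phi = graft_sum M N' phi.
Proof.
move=> NN' phiP; suff [_ -> //] : same_grafts M N N'.
exact: (cong_fcanon (@same_grafts_refl M) (@same_grafts_sym M) (@same_grafts_trans M)
  (@same_grafts_cat M) (@same_grafts_catC M) (@same_grafts_canon M) NN').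
Qed.

Lemma graft_sum_invM M M' N phi : fcanon M = fcanon M' -> invH phi ->
  graft_sum M N phi = graft_sum M' N phi.
Proof.
move=> MM'; elim/forest_ind: N phi => [|ts N IHts IHN] phi phiP; first by rewrite !graft_sum_nilr.
rewrite -cat1s !graft_sum_cat !graft_sum_RNode; congr (_ + _ + _).
- by apply: phiP; apply: fcanon_cat => //; apply: fcanon_RNode; exact: fcanon_cat.
- by apply: IHts => x y xy; apply: phiP; apply: fcanon_cat => //; exact: fcanon_RNode.
- by apply: IHN => x y xy; apply: phiP; exact: fcanon_cat.
Qed.

(** * The coproduct of a grafting sum *)

Lemma invT_integ (K : Type) (x : seq (rat * K)) (G : seq forest -> K -> rat) :
  (forall k, invT (G^~ k)) -> invT (fun a => integ x (G a)).
Proof. by move=> GP a b ab; apply: eq_integ => k; apply: GP. Qed.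

Section GraftSumDelta.

Variable M : forest.

Definition graft_Delta_formula (N : forest) := forall g, invT g ->
  graft_sum M N (fun f => integ (Delta_forest f) g) =
  integ (Delta_forest N) (fun a => graft_sum M (d0 a) (fun x => g [:: x; d1 a])) +
  integ (Delta_forest N) (fun a => integ (Delta_forest M)
     (fun m => graft_sum (d1 m) (d1 a) (fun y => g [:: d0 a ++ d0 m; y]))).

Lemma graft_Delta_nil : graft_Delta_formula [::].
Proof.
move=> g gP; rewrite !integ_Delta_forest_nil /= !graft_sum_nilr.
by under eq_integ => m do rewrite graft_sum_nilr; rewrite integ0 !addr0.
Qed.

Lemma graft_Delta_cat A B :
  graft_Delta_formula A -> graft_Delta_formula B -> graft_Delta_formula (A ++ B).
Proof.
move=> DA DB g gP.
pose gB a := integ (Delta_forest B) (fun b => g [:: d0 a ++ d0 b; d1 a ++ d1 b]).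
have gBP : invT gB by apply: invT_integ => b; apply: invT_catr.
set T1 := integ (Delta_forest A) (fun a => graft_sum M (d0 a) (fun x => gB [:: x; d1 a])).
set T2 := integ (Delta_forest A) (fun a => integ (Delta_forest M)
  (fun m => graft_sum (d1 m) (d1 a) (fun y => gB [:: d0 a ++ d0 m; y]))).
set T3 := integ (Delta_forest A) (fun a => integ (Delta_forest B)
  (fun b => graft_sum M (d0 b) (fun x => g [:: d0 a ++ x; d1 a ++ d1 b]))).
set T4 := integ (Delta_forest A) (fun a => integ (Delta_forest B) (fun b =>
  integ (Delta_forest M) (fun m =>
    graft_sum (d1 m) (d1 b) (fun y => g [:: d0 a ++ (d0 b ++ d0 m); d1 a ++ y])))).
have -> : graft_sum M (A ++ B) (fun f => integ (Delta_forest f) g) = T1 + T2 + (T3 + T4).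
  rewrite graft_sum_cat -(DA _ gBP); congr (_ + _).
    by apply: eq_graft_sum => x; rewrite integ_Delta_forest_cat.
  under eq_graft_sum => y do rewrite integ_Delta_forest_cat.
  rewrite graft_sum_integ /T3 /T4 -integD; apply: eq_integ => a; exact: DB (invT_catl a gP).
have -> : integ (Delta_forest (A ++ B)) (fun c => graft_sum M (d0 c) (fun x => g [:: x; d1 c]))
    = T1 + T3.
  rewrite /T1 /T3 integ_Delta_forest_cat -integD; apply: eq_integ => a /=.
  under eq_integ => b do rewrite graft_sum_cat.
  by rewrite integD graft_sum_integ.
rewrite addrACA; congr (_ + _); symmetry.
rewrite /T2 /T4 integ_Delta_forest_cat -integD; apply: eq_integ => a /=.
rewrite exchange_integ [X in _ = _ + X]exchange_integ -integD; apply: eq_integ => m /=.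
under eq_integ => b do rewrite graft_sum_cat.
rewrite integD graft_sum_integ; congr (_ + _).
  (* the left factors A' B' M' and A' M' B' only differ by a permutation *)
  apply: eq_integ => b; apply: eq_graft_sum => y; apply: gP => /=.
  by rewrite -!catA (fcanon_cat (erefl (fcanon (d0 a))) (fcanon_catC _ _)).
by apply: eq_integ => b; apply: eq_graft_sum => y; rewrite catA.
Qed.

Lemma graft_Delta_RNode ts : graft_Delta_formula ts -> graft_Delta_formula [:: RNode ts].
Proof.
move=> Dts g gP.
pose g2 c := g [:: d0 c; [:: RNode (d1 c)]].
have g2P : invT g2.
  by move=> a b /fcanon_nth ab; apply: gP; rewrite /= (ab 0%N) (fcanon_RNode (ab 1%N)).
rewrite graft_sum_RNode integ_Delta_forest_RNode integ_Delta_forest_cat.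
under eq_graft_sum => y do rewrite integ_Delta_forest_RNode.
rewrite graft_sumD -/(integ _ g2) (Dts _ g2P) !integ_Delta_forest_RNode /= graft_sum_RNode.
under [X in _ = _ + (X + _)]eq_integ => m do rewrite graft_sum_nilr.
under [X in _ = _ + (_ + X)]eq_integ => a do under eq_integ => m do rewrite graft_sum_RNode.
rewrite integ0 add0r; under [X in _ = _ + X]eq_integ => a do rewrite integD.
rewrite integD; ring.
Qed.

Lemma graft_sum_Delta N : graft_Delta_formula N.
Proof.
elim/forest_ind: N => [|ts N Dts DN]; first exact: graft_Delta_nil.
by rewrite -cat1s; apply: graft_Delta_cat => //; apply: graft_Delta_RNode.
Qed.

End GraftSumDelta.

(** * Primitive elements *)

Lemma integ_Dtilde_forest f g : integ (Dtilde_forest f) g =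
  integ (Delta_forest f) g - g [:: [::]; f] - g [:: f; [::]].
Proof. by rewrite /Dtilde_forest integ_cat !integ_cons integ_nil !mulN1r addr0 addrA. Qed.

Lemma integ_Dtilde x g : integ (Dtilde x) g = integ x (fun f => integ (Dtilde_forest f) g).
Proof. by rewrite /Dtilde /scaleT integ_bind. Qed.

Lemma prim_integ_Dtilde p g : prim p -> invT g ->
  integ p (fun f => integ (Dtilde_forest f) g) = 0.
Proof. by move=> /eqT_integ pP gP; rewrite -integ_Dtilde pP ?integ_nil. Qed.

Lemma prim_integ_Delta p g : prim p -> invT g ->
  integ p (fun n => integ (Delta_forest n) g) = integ p (fun n => g [:: [::]; n] + g [:: n; [::]]).
Proof.
move=> pP gP; apply/eqP; rewrite -subr_eq0 -integB -(prim_integ_Dtilde pP gP); apply/eqP.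
by apply: eq_integ => f; rewrite integ_Dtilde_forest opprD addrA.
Qed.

Lemma Delta_forest_weight n (Phi : seq forest -> nat -> rat) :
  integ (Delta_forest n) (fun a => Phi a (fweight (d0 a) + fweight (d1 a))%N) =
  integ (Delta_forest n) (fun a => Phi a (fweight n)).
Proof.
elim/forest_ind: n Phi => [|ts N IHts IHN] Phi; first by rewrite !integ_Delta_forest_nil.
rewrite -cat1s !integ_Delta_forest_cat.
transitivity (integ (Delta_forest [:: RNode ts]) (fun a => integ (Delta_forest N) (fun b =>
   Phi [:: d0 a ++ d0 b; d1 a ++ d1 b] (fweight (d0 a) + fweight (d1 a) + fweight N)%N))).
  apply: eq_integ => a /=; rewrite -(IHN (fun b k =>
    Phi [:: d0 a ++ d0 b; d1 a ++ d1 b] (fweight (d0 a) + fweight (d1 a) + k)%N)).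
  by apply: eq_integ => b; rewrite !fweight_cat addnACA.
rewrite !integ_Delta_forest_RNode /=; congr (_ + _).
  by apply: eq_integ => b; rewrite /fweight /= !addn0.
rewrite -(IHts (fun a k => integ (Delta_forest N) (fun b =>
   Phi [:: d0 a ++ d0 b; RNode (d1 a) :: d1 b] (k.+1 + fweight N)%N))).
by apply: eq_integ => a; apply: eq_integ => b; rewrite /fweight /= addn0 addnS.
Qed.

Lemma prim_counit p : prim p -> integ p (fun n => (n == [::])%:R) = 0.
Proof.
move=> pP; pose G a := ((fweight (d0 a) + fweight (d1 a))%N == 0%N)%:R : rat.
have GP : invT G.
  by move=> a b /fcanon_nth ab; rewrite /G (fweight_canon (ab 0%N)) (fweight_canon (ab 1%N)).
apply/eqP; rewrite -oppr_eq0 -(prim_integ_Dtilde pP GP) -mulN1r -integZ; apply/eqP.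
apply: eq_integ => f; rewrite integ_Dtilde_forest.
have [->|f_nil] := eqVneq f [::]; first by rewrite integ_Delta_forest_nil /G /=; ring.
rewrite /G (Delta_forest_weight f (fun _ k => (k == 0%N)%:R)) /= addn0 fweight_eq0 (negbTE f_nil).
by rewrite integ0 mulr0 !subr0.
Qed.

Section PrimitiveGraft.

Variable p : H.
Hypothesis pP : prim p.

Lemma prim_integ_Delta_weighted (Psi : seq forest -> rat) : invT Psi ->
  integ p (fun n => (fweight n)%:R^-1 * integ (Delta_forest n) Psi) =
  integ p (fun n => (fweight n)%:R^-1 * (Psi [:: [::]; n] + Psi [:: n; [::]])).
Proof.
move=> PsiP; pose G a := ((fweight (d0 a) + fweight (d1 a))%N)%:R^-1 * Psi a.
have GP : invT G.
  move=> a b ab; have /fcanon_nth ab' := ab.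
  by rewrite /G (fweight_canon (ab' 0%N)) (fweight_canon (ab' 1%N)) (PsiP _ _ ab).
(* the two factors of each term of [Delta_forest n] have total weight [fweight n] *)
transitivity (integ p (fun n => integ (Delta_forest n) G)).
  apply: eq_integ => n; rewrite -integZ.
  exact: esym (Delta_forest_weight n (fun a k => k%:R^-1 * Psi a)).
by rewrite (prim_integ_Delta pP GP); apply: eq_integ => n; rewrite /G /= addn0 mulrDr.
Qed.

Lemma prim_integ_graft_nill (h : forest -> rat) :
  integ p (fun n => (fweight n)%:R^-1 * graft_sum [::] n h) = integ p h.
Proof.
(* at n = [::], [0^-1 = 0] loses the term h [::], but p has no constant term *)
transitivity (integ p (fun n => h n - (n == [::])%:R * h [::])).
  apply: eq_integ => n; rewrite graft_sum_nill; have [->|n_nil] := eqVneq n [::].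
    by rewrite /= mul0r mulr0 mul1r subrr.
  by rewrite mulrA mulVf ?mul1r ?mul0r ?subr0 // pnatr_eq0 fweight_eq0.
by rewrite integB integZr prim_counit // mul0r subr0.
Qed.

Lemma Dtilde_top_forest_prim m g : invT g ->
  integ p (fun n => (fweight n)%:R^-1 * graft_sum m n (fun f => integ (Dtilde_forest f) g)) =
  integ p (fun n => g [:: m; n]) +
  integ (Dtilde_forest m) (fun a => integ p (fun n =>
     (fweight n)%:R^-1 * graft_sum (d1 a) n (fun y => g [:: d0 a; y]))).
Proof.
move=> gP.
set K := fun a => integ p (fun n =>
  (fweight n)%:R^-1 * graft_sum (d1 a) n (fun y => g [:: d0 a; y])).
pose Psi1 a := graft_sum m (d0 a) (fun x => g [:: x; d1 a]).
pose Psi2 a := integ (Delta_forest m)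
  (fun m' => graft_sum (d1 m') (d1 a) (fun y => g [:: d0 a ++ d0 m'; y])).
have Psi1P : invT Psi1.
  move=> a b ab; have /fcanon_nth ab' := ab; rewrite /Psi1 (graft_sum_inv _ (ab' 0%N)).
    by apply: eq_graft_sum => x; apply: gP; rewrite /= (ab' 1%N).
  by move=> x y xy; apply: gP; rewrite /= xy.
have Psi2P : invT Psi2.
  move=> a b ab; have /fcanon_nth ab' := ab; apply: eq_integ => m'.
  rewrite (graft_sum_inv _ (ab' 1%N)); last by move=> x y xy; apply: gP; rewrite /= xy.
  by apply: eq_graft_sum => y; apply: gP; rewrite /= (fcanon_cat (ab' 0%N) (erefl _)).
have DeltaK : integ (Delta_forest m) K =
    integ p (fun n => (fweight n)%:R^-1 * integ (Delta_forest n) Psi2).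
  rewrite (prim_integ_Delta_weighted Psi2P) exchange_integ; apply: eq_integ => n.
  rewrite /Psi2 /=; under [X in _ = _ * (_ + X)]eq_integ => m' do rewrite graft_sum_nilr.
  by rewrite integ0 addr0 integZ.
have expand n : graft_sum m n (fun f => integ (Dtilde_forest f) g) =
    integ (Delta_forest n) Psi1 + integ (Delta_forest n) Psi2
    - graft_sum m n (fun f => g [:: [::]; f]) - graft_sum m n (fun f => g [:: f; [::]]).
  by under eq_graft_sum do rewrite integ_Dtilde_forest; rewrite !graft_sumB graft_sum_Delta.
have Psi1_cancel : integ p (fun n => (fweight n)%:R^-1 * integ (Delta_forest n) Psi1) =
    integ p (fun n => (fweight n)%:R^-1 * graft_sum m n (fun f => g [:: f; [::]])).
  rewrite (prim_integ_Delta_weighted Psi1P); apply: eq_integ => n.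
  by rewrite /Psi1 /= graft_sum_nilr add0r.
under eq_integ => n do rewrite expand !mulrBr mulrDr.
rewrite !integB integD Psi1_cancel integ_Dtilde_forest DeltaK /K /= prim_integ_graft_nill.
ring.
Qed.

End PrimitiveGraft.

Lemma Dtilde_topH_prim x p g : prim p -> invT g ->
  integ (Dtilde (topH x p)) g =
  integ x (fun m => integ p (fun n => g [:: m; n])) +
  integ (Dtilde x) (fun a => integ (topH (sing (d1 a)) p) (fun y => g [:: d0 a; y])).
Proof.
move=> pP gP; rewrite integ_Dtilde integ_topH integ_Dtilde -integD; apply: eq_integ => m.
rewrite Dtilde_top_forest_prim //; congr (_ + _).
by apply: eq_integ => a; rewrite integ_topH_sing.
Qed.

Lemma invT_topH p g : invT g ->
  invT (fun a => integ (topH (sing (d1 a)) p) (fun y => g [:: d0 a; y])).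
Proof.
move=> gP a b /fcanon_nth ab; rewrite !integ_topH_sing; apply: eq_integ => n; congr (_ * _).
rewrite (@graft_sum_invM (d1 a) (d1 b) n _ (ab 1%N)); last first.
  by move=> y y' yy'; apply: gP; rewrite /= yy'.
by apply: eq_graft_sum => y; apply: gP; rewrite /= (ab 0%N).
Qed.

Lemma top_seq_rcons s p : s != [::] -> top_seq (rcons s p) = topH (top_seq s) p.
Proof. by case: s => // q s _ /=; rewrite foldl_rcons. Qed.

Definition all_prim (s : seq H) := forall p, p \in s -> prim p.

Lemma all_prim_rcons s p : all_prim (rcons s p) -> all_prim s /\ prim p.
Proof.
by move=> sP; split=> [q qs|]; apply: sP; rewrite mem_rcons inE ?qs ?orbT ?eqxx.
Qed.

Lemma Dtilde_top_seq s g : s != [::] -> all_prim s -> invT g ->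
  integ (Dtilde (top_seq s)) g =
  \sum_(1 <= j < size s) integ (top_seq (take j s)) (fun a =>
      integ (top_seq (drop j s)) (fun b => g [:: a; b])).
Proof.
elim/last_ind: s g => [|s p IH] g // _ /all_prim_rcons[sP pP] gP.
have [->|s_nil] := eqVneq s [::].
  by rewrite /= big_geq // integ_Dtilde (prim_integ_Dtilde pP gP).
rewrite top_seq_rcons // Dtilde_topH_prim // (IH _ s_nil sP (invT_topH p gP)).
rewrite size_rcons big_nat_recr /=; last by rewrite lt0n size_eq0.
rewrite addrC -cats1 takel_cat // take_size drop_size_cat //; congr (_ + _).
apply: eq_big_nat => j /andP[j1 js].
rewrite takel_cat ?(ltnW js) // drop_cat js cats1.
rewrite top_seq_rcons; last by rewrite -size_eq0 size_drop subn_eq0 -ltnNge.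
apply: eq_integ => a /=; rewrite integ_topH; apply: eq_integ => b; by rewrite integ_topH_sing.
Qed.

(** * Iterated reduced coproducts and the maps F_i *)

Lemma integ_Dtilde_pow k x g :
  integ (Dtilde_pow k x) g = integ x (fun f => integ (Dtilde_pow_forest k f) g).
Proof. by rewrite /Dtilde_pow /scaleT integ_bind. Qed.

Lemma eps_forestE f : eps_forest f = (f == [::])%:R.
Proof. by case: f. Qed.

Lemma integ_Dtilde_pow_forest0 f g :
  integ (Dtilde_pow_forest 0 f) g = g [:: f] - (f == [::])%:R * g [:: [::]].
Proof. by rewrite /= !integ_cons integ_nil mul1r addr0 mulNr eps_forestE. Qed.

Lemma integ_Dtilde_pow_forestS k f g : integ (Dtilde_pow_forest k.+1 f) g =
  integ (Dtilde_forest f) (fun e =>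
    integ (Dtilde_pow_forest k (d0 e)) (fun d => g (rcons d (d1 e)))).
Proof.
rewrite /= integ_flatten big_map /integ; apply: eq_bigr => e _.
by rewrite -/(integ _ _) /scaleT integ_scale (integ_map (fun d => rcons d (d1 e.2))).
Qed.

Lemma Dtilde_forest_inv f f' g : fcanon f = fcanon f' -> invT g ->
  integ (Dtilde_forest f) g = integ (Dtilde_forest f') g.
Proof.
move=> ff' gP; rewrite !integ_Dtilde_forest (Delta_forest_inv ff' gP).
by rewrite (gP [:: [::]; f] [:: [::]; f']) ?(gP [:: f; [::]] [:: f'; [::]]) //= ff'.
Qed.

Lemma invT_rcons g : invT g -> forall d d' x x',
  map fcanon d = map fcanon d' -> fcanon x = fcanon x' -> g (rcons d x) = g (rcons d' x').
Proof. by move=> gP d d' x x' dd' xx'; apply: gP; rewrite !map_rcons dd' xx'. Qed.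

Lemma Dtilde_pow_forest_inv k f f' g : fcanon f = fcanon f' -> invT g ->
  integ (Dtilde_pow_forest k f) g = integ (Dtilde_pow_forest k f') g.
Proof.
elim: k f f' g => [|k IH] f f' g ff' gP.
  rewrite !integ_Dtilde_pow_forest0 -(fcanon_eq_nil f) -(fcanon_eq_nil f') ff'.
  by rewrite (gP [:: f] [:: f']) //= ff'.
rewrite !integ_Dtilde_pow_forestS; apply: Dtilde_forest_inv => // a b /fcanon_nth ab.
rewrite (IH _ _ _ (ab 0%N)); last by move=> d d' dd'; apply: (invT_rcons gP).
by apply: eq_integ => d; apply: (invT_rcons gP).
Qed.

Lemma Dtilde_pow_forest_nil k g : integ (Dtilde_pow_forest k [::]) g = 0.
Proof.
elim: k g => [|k IH] g; first by rewrite integ_Dtilde_pow_forest0 mul1r subrr.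
rewrite integ_Dtilde_pow_forestS integ_Dtilde_forest integ_Delta_forest_nil /=.
by rewrite !IH !subrr.
Qed.

Lemma top_seq_counit s : s != [::] -> all_prim s ->
  integ (top_seq s) (fun f => (f == [::])%:R) = 0.
Proof.
case/lastP: s => [|s q] // _ /all_prim_rcons[sP qP].
have [->|s_nil] := eqVneq s [::]; first exact: prim_counit.
rewrite top_seq_rcons // integ_topH -[RHS](integ0 (top_seq s)); apply: eq_integ => m.
rewrite -[RHS](integ0 q); apply: eq_integ => n.
by rewrite /graft_sum big1 ?mulr0 // => v _; rewrite (negbTE (graftF_neq_nil _ _ _)).
Qed.

Fixpoint block_sum (k : nat) (s : seq H) (g : seq forest -> rat) : rat :=
  match k with
  | 0%N => integ (top_seq s) (fun f => g [:: f])
  | k'.+1 => \sum_(1 <= j < size s)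
       block_sum k' (take j s) (fun a => integ (top_seq (drop j s)) (fun b => g (rcons a b)))
  end.

Lemma integ_Dtilde_pow_top_seq k s g : s != [::] -> all_prim s -> invT g ->
  integ (Dtilde_pow k (top_seq s)) g = block_sum k s g.
Proof.
elim: k s g => [|k IH] s g s_nil sP gP; rewrite integ_Dtilde_pow.
  under eq_integ => f do rewrite integ_Dtilde_pow_forest0.
  by rewrite integB integZr top_seq_counit // mul0r subr0.
under eq_integ => f do rewrite integ_Dtilde_pow_forestS.
rewrite -integ_Dtilde Dtilde_top_seq //; last first.
  move=> a b /fcanon_nth ab; rewrite (Dtilde_pow_forest_inv _ (ab 0%N)); last first.
    by move=> d d' dd'; apply: (invT_rcons gP).
  by apply: eq_integ => d; apply: (invT_rcons gP).
rewrite /=; apply: eq_big_nat => j /andP[j1 js].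
rewrite -IH => [||q /mem_take|d d' dd']; last by apply: eq_integ => b; apply: (invT_rcons gP).
- by rewrite integ_Dtilde_pow; apply: eq_integ => a; exact: exchange_integ.
- by rewrite -size_eq0 size_take js -lt0n.
- exact: sP.
Qed.

Lemma integ_pure_tensor_nil g : integ (pure_tensor [::]) g = g [::].
Proof. by rewrite /= integ_cons integ_nil mul1r addr0. Qed.

Lemma integ_pure_tensor_cons p ps g : integ (pure_tensor (p :: ps)) g =
  integ p (fun f => integ (pure_tensor ps) (fun a => g (f :: a))).
Proof. exact: (integ_allpairs (fun a b => a :: b)). Qed.

Lemma integ_pure_tensor_rcons s q g : integ (pure_tensor (rcons s q)) g =
  integ (pure_tensor s) (fun a => integ q (fun b => g (rcons a b))).
Proof.
elim: s g => [|p s IH] g.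
  rewrite [rcons _ _]/= integ_pure_tensor_cons integ_pure_tensor_nil.
  by apply: eq_integ => f; rewrite integ_pure_tensor_nil.
by rewrite rcons_cons !integ_pure_tensor_cons; apply: eq_integ => f; rewrite IH.
Qed.

Lemma block_sum_small k s g : (size s <= k)%N -> block_sum k s g = 0.
Proof.
elim: k s g => [|k IH] s g /=; first by rewrite leqn0 size_eq0 => /eqP ->; rewrite integ_nil.
move=> sk; rewrite big_seq_cond big1 // => j; rewrite mem_index_iota => /andP[/andP[_ js] _].
by apply: IH; rewrite size_take js -ltnS (leq_trans js).
Qed.

Lemma block_sum_singletons s g : s != [::] ->
  block_sum (size s).-1 s g = integ (pure_tensor s) g.
Proof.
elim/last_ind: s g => [|s q IH] g // _.
have [->|s_nil] := eqVneq s [::]; first by rewrite integ_pure_tensor_rcons integ_pure_tensor_nil.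
have [k sk] : exists k, size s = k.+1 by exists (size s).-1; rewrite prednK // lt0n size_eq0.
rewrite size_rcons sk /= size_rcons sk big_nat_recr //= big_seq_cond big1 ?add0r; last first.
  move=> j; rewrite mem_index_iota => /andP[/andP[_ jk] _]; apply: block_sum_small.
  by rewrite size_take size_rcons sk ltnS (ltnW jk) -ltnS.
rewrite -cats1 -sk takel_cat // take_size drop_size_cat // cats1.
by rewrite integ_pure_tensor_rcons -IH // sk.
Qed.

Lemma integ_F X phi : integ (F X) phi = integ X (fun ps => integ (top_seq ps) phi).
Proof. by rewrite /F /scaleH integ_bind. Qed.

Lemma integ_tens X g : integ (tens X) g = integ X (fun ps => integ (pure_tensor ps) g).
Proof. by rewrite /tens /scaleT integ_bind. Qed.

Lemma integ_Dtilde_pow_F i X g : (1 <= i)%N -> in_prim_tens i X -> invT g ->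
  integ (Dtilde_pow i.-1 (F X)) g = integ (tens X) g.
Proof.
move=> i1 XP gP; rewrite integ_Dtilde_pow integ_F integ_tens.
apply: eq_in_integ => -[c ps] /XP [/= sz psP].
have ps_nil : ps != [::] by rewrite -size_eq0 sz -lt0n.
by rewrite -integ_Dtilde_pow integ_Dtilde_pow_top_seq // -sz block_sum_singletons.
Qed.

Lemma integ_Dtilde_pow_F_high i k X g : (i.-1 < k)%N -> in_prim_tens i X -> invT g ->
  integ (Dtilde_pow k (F X)) g = 0.
Proof.
move=> ik XP gP; rewrite integ_Dtilde_pow integ_F -(integ0 X).
apply: eq_in_integ => -[c ps] /XP [/= sz psP].
have [->|ps_nil] := eqVneq ps [::]; first by rewrite integ_nil.
rewrite -integ_Dtilde_pow integ_Dtilde_pow_top_seq // block_sum_small // sz.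
by move: ik; rewrite -sz; case: (size ps) ps_nil => // _; rewrite size_eq0 => /negP.
Qed.

Lemma integ_foldl_topH x r phi :
  integ (foldl topH x r) phi = integ x (fun m => integ (foldl topH (sing m) r) phi).
Proof.
elim: r x => [|q r IH] x /=; first by apply: eq_integ => m; rewrite integ_sing.
by rewrite IH integ_topH; apply: eq_integ => m; rewrite IH integ_topH_sing.
Qed.

Lemma integ_foldl_topH_tensor x r phi : integ (foldl topH x r) phi =
  integ x (fun m => integ (pure_tensor r)
    (fun a => integ (foldl topH (sing m) (map sing a)) phi)).
Proof.
elim: r x => [|q r IH] x /=.
  by apply: eq_integ => m; rewrite integ_pure_tensor_nil /= integ_sing.
rewrite IH integ_topH; apply: eq_integ => m; rewrite integ_pure_tensor_cons.
apply: eq_integ => n; rewrite graft_sum_integ -integZ; apply: eq_integ => a /=.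
by rewrite integ_foldl_topH integ_topH_sing integ_sing.
Qed.

Lemma integ_F_tens X phi :
  integ (F X) phi = integ (tens X) (fun a => integ (top_seq (map sing a)) phi).
Proof.
rewrite integ_F integ_tens; apply: eq_integ => -[|q r]; first by rewrite integ_pure_tensor_nil.
by rewrite /= integ_foldl_topH_tensor integ_pure_tensor_cons.
Qed.

Lemma integ_foldl_topH_sing_inv r r' x x' :
  (forall psi, invH psi -> integ x psi = integ x' psi) -> map fcanon r = map fcanon r' ->
  forall psi, invH psi ->
    integ (foldl topH x (map sing r)) psi = integ (foldl topH x' (map sing r')) psi.
Proof.
elim: r r' x x' => [|f r IH] [|f' r'] x x' xx' //= [ff' rr'].
apply: IH => // psi psiP; rewrite !integ_topH.
under eq_integ => m do rewrite integ_sing.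
under [RHS]eq_integ => m do rewrite integ_sing.
rewrite (fweight_canon ff') xx' => [|m m' mm']; last by congr (_ * _); apply: graft_sum_invM.
by apply: eq_integ => m; congr (_ * _); apply: graft_sum_inv.
Qed.

Lemma invT_top_seq_sing phi : invH phi -> invT (fun a => integ (top_seq (map sing a)) phi).
Proof.
move=> phiP [|a0 a] [|b0 b] //= [ab0 ab].
by apply: integ_foldl_topH_sing_inv ab _ phiP => psi psiP; rewrite !integ_sing; apply: psiP.
Qed.

Lemma F_eq0_of_tens X : (forall g, invT g -> integ (tens X) g = 0) -> eqH (F X) [::].
Proof.
move=> X0; apply/eqH_integ => phi phiP.
by rewrite integ_F_tens integ_nil X0 //; apply: invT_top_seq_sing.
Qed.

Lemma integ_oneH_F_sum c n (Xs : nat -> seq (rat * seq H)) phi :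
  integ (scaleH c oneH ++ flatten [seq F (Xs j) | j <- iota 1 n]) phi =
  c * phi [::] + \sum_(1 <= j < n.+1) integ (F (Xs j)) phi.
Proof.
by rewrite integ_cat integ_flatten big_map /index_iota subn1 integ_cons integ_nil addr0 mulr1.
Qed.

Lemma oneH_F_sum_direct n c (Xs : nat -> seq (rat * seq H)) :
  (forall j, (1 <= j <= n)%N -> in_prim_tens j (Xs j)) ->
  eqH (scaleH c oneH ++ flatten [seq F (Xs j) | j <- iota 1 n]) [::] ->
  c = 0 /\ (forall j, (1 <= j <= n)%N -> eqH (F (Xs j)) [::]).
Proof.
elim: n => [|n IH] XsP /eqH_integ rel0.
  have := rel0 (fun f => (f == [::])%:R).
  rewrite integ_oneH_F_sum big_geq // integ_nil addr0 mulr1 => -> //.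
    by split=> // j /andP[j1]; rewrite leqn0 => /eqP j0; rewrite j0 in j1.
  by move=> f f' ff'; rewrite -fcanon_eq_nil ff' fcanon_eq_nil.
have XnP : in_prim_tens n.+1 (Xs n.+1) by apply: XsP; rewrite leqnn.
(* Dtilde^n kills c 1 and the F_j (X_j), j <= n, and maps F_(n+1) (X_(n+1)) to X_(n+1) *)
have Fn0 : eqH (F (Xs n.+1)) [::].
  apply: F_eq0_of_tens => g gP; rewrite -(integ_Dtilde_pow_F _ XnP gP) // integ_Dtilde_pow.
  have := rel0 _ (fun f f' => Dtilde_pow_forest_inv n (g := g) ^~ gP).
  rewrite integ_oneH_F_sum big_nat_recr //= Dtilde_pow_forest_nil mulr0 add0r integ_nil.
  rewrite big_nat_cond big1 ?add0r // => j /andP[/andP[j1 jn] _].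
  rewrite -integ_Dtilde_pow (integ_Dtilde_pow_F_high (i := j)) //.
  - by rewrite -ltnS prednK.
  - by apply: XsP; rewrite j1 ltnW.
have [c0 F0] : c = 0 /\ (forall j, (1 <= j <= n)%N -> eqH (F (Xs j)) [::]).
  apply: IH; first by move=> j /andP[j1 jn]; apply: XsP; rewrite j1 (leq_trans jn).
  apply/eqH_integ => phi phiP; have := rel0 phi phiP.
  move/eqH_integ: Fn0 => /(_ phi phiP) Fn0.
  by rewrite !integ_oneH_F_sum big_nat_recr //= Fn0 integ_nil addr0.
split=> // j /andP[j1]; rewrite leq_eqVlt => /orP[/eqP->|jn] //.
by apply: F0; rewrite j1 -ltnS.
Qed.

Theorem lemma4p4 (i : nat) : (1 <= i)%N ->
  (* tilde Delta^(i-1) o F_i = Id on Prim^{(x) i} *)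
  (forall X, in_prim_tens i X -> eqT (Dtilde_pow i.-1 (F X)) (tens X)) /\
  (* tilde Delta^k o F_i = 0 for k > i-1 *)
  (forall (k : nat) X, (i.-1 < k)%N -> in_prim_tens i X ->
     eqT (Dtilde_pow k (F X)) [::]) /\
  (* F_i is injective *)
  (forall X Y, in_prim_tens i X -> in_prim_tens i Y ->
     eqH (F X) (F Y) -> eqT (tens X) (tens Y)) /\
  (* Q1 + sum_(j >= 1) Im(F_j) is direct *)
  (forall (c : rat) (n : nat) (Xs : nat -> seq (rat * seq H)),
     (forall j, (1 <= j <= n)%N -> in_prim_tens j (Xs j)) ->
     eqH (scaleH c oneH ++ flatten [seq F (Xs j) | j <- iota 1 n]) [::] ->
     c = 0 /\ (forall j, (1 <= j <= n)%N -> eqH (F (Xs j)) [::])).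
Proof.
move=> i1; split; [|split; [|split]].
- by move=> X XP; apply/eqT_integ => g gP; apply: integ_Dtilde_pow_F.
- move=> k X ik XP; apply/eqT_integ => g gP.
  by rewrite (integ_Dtilde_pow_F_high ik XP gP) integ_nil.
- move=> X Y XP YP /eqH_integ FXY; apply/eqT_integ => g gP.
  rewrite -(integ_Dtilde_pow_F i1 XP gP) -(integ_Dtilde_pow_F i1 YP gP) !integ_Dtilde_pow.
  by apply: FXY => f f' ff'; apply: Dtilde_pow_forest_inv.
- by move=> c n Xs; apply: oneH_F_sum_direct.
Qed.
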